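(* Let $\epsilon>0$, $\beta\in(0,1)$, $\delta\in(0,1)$, and let $c:\mathbb{N}^2\times(0,1)\to\mathbb{R}_+$ (indexed by $\epsilon$ and phase indices $k_1,k_2$) be any family of threshold functions. If all rewards lie in $[0,1]$ (i.e. the potential-reward tables are in $([0,1]^K)^T$), then the algorithm AdaP-TT described in the context satisfies $\epsilon$-global DP.
   Context: Setting: $K$ arms; at each round $n$ the algorithm pulls $I_n\in[K]$ and observes reward $X_n$. $N_{n,a}=\sum_{t<n}\mathbf{1}\{I_t=a\}$. Laplace$(b)$ denotes the distribution with density $\frac{1}{2b}e^{-|x|/b}$. AdaP-TT (inputs $\beta,\delta,\epsilon$, thresholds $c_{\epsilon,k_1,k_2}$): In rounds $1,\dots,K$ pull each arm once. For each arm $a$ set phase index $k_a=1$, $T_1(a)=K+1$, $\tilde N_{1,a}=1$, $\tilde\mu_{1,a}=$ (initial reward of $a$) $+Y_{1,a}$ with $Y_{1,a}\sim$ Laplace$(1/\epsilon)$; $L_{n,a}$ = number of rounds $t<n$ with $B_t=a$; $N^a_{n,b}$ = number of rounds $t<n$ with $B_t=a$ and $I_t=b$. For each round $n>K$: (1) For every arm $a$ with $N_{n,a}\ge 2N_{T_{k_a}(a),a}$: set $k_a\leftarrow k_a+1$, $T_{k_a}(a)=n$, $\tilde N_{k_a,a}=N_{T_{k_a}(a),a}-N_{T_{k_a-1}(a),a}$, $\hat\mu_{k_a,a}=\tilde N_{k_a,a}^{-1}\sum_{s=T_{k_a-1}(a)}^{T_{k_a}(a)-1}X_s\mathbf{1}\{I_s=a\}$,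 and $\tilde\mu_{k_a,a}=\hat\mu_{k_a,a}+Y_{k_a,a}$ with fresh independent $Y_{k_a,a}\sim$ Laplace$(1/(\epsilon\tilde N_{k_a,a}))$. (2) $\hat a_n=\arg\max_b\tilde\mu_{k_b,b}$. (3) If for all $b\ne\hat a_n$, $\frac{(\tilde\mu_{k_{\hat a_n},\hat a_n}-\tilde\mu_{k_b,b})^2}{1/\tilde N_{k_{\hat a_n},\hat a_n}+1/\tilde N_{k_b,b}}\ge 2c_{\epsilon,k_{\hat a_n},k_b}(\tilde N_{k_{\hat a_n},\hat a_n},\tilde N_{k_b,b},\delta)$, stop and output recommendation $\hat a_n$ and stopping time $n$. (4) Leader $B_n=\arg\max_a\{\tilde\mu_{k_a,a}+\sqrt{k_a/\tilde N_{k_a,a}}+k_a/(\epsilon\tilde N_{k_a,a})\}$; challenger $C_n=\arg\min_{a\ne B_n}\frac{\tilde\mu_{k_{B_n},B_n}-\tilde\mu_{k_a,a}}{\sqrt{1/N_{n,B_n}+1/N_{n,a}}}$. (5) $I_n=B_n$ if $N^{B_n}_{n,B_n}\le\beta L_{n+1,B_n}$ (where $L_{n+1,B_n}=L_{n,B_n}+1$), else $I_n=C_n$; pull $I_n$, observe $X_n$, update counts. $\epsilon$-global DP: each user $t$ is a vector $\mathbf{x}_t\in\mathbb{R}^K$ of potential rewards and the reward observed at round $t$ is $x_{t,I_t}$. For a table $\underline{\mathbf{d}}^T=(\mathbf{x}_1,\dots,\mathbf{x}_T)$, let $\pi(\underline{a}^T,\hat a,T\mid\underline{\mathbf{d}}^T)$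 be the probability that the algorithm pulls exactly $a_1,\dots,a_T$, then stops and recommends $\hat a$. The algorithm is $\epsilon$-global DP if $\pi(\underline{a}^T,\hat a,T\mid\underline{\mathbf{d}}^T)\le e^\epsilon\pi(\underline{a}^T,\hat a,T\mid\underline{\mathbf{d}}'^T)$ for all $T$, all tables $\underline{\mathbf{d}}^T,\underline{\mathbf{d}}'^T$ differing in exactly one row, all $\underline{a}^T\in[K]^T$, $\hat a\in[K]$. *)

From HB Require Import structures.
From mathcomp Require Import all_boot all_order all_algebra.
From mathcomp Require Import all_classical all_reals all_analysis.
Set Implicit Arguments.
Unset Strict Implicit.
Unset Printing Implicit Defensive.
Import Order.TTheory GRing.Theory Num.Theory.
Local Open Scope ring_scope.

(* Arms are the natural numbers 0..K-1 (arm a of the paper = a-1 here).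
   Rounds are numbered 1,2,...; a reward table is d : nat -> nat -> R with
   d t a = x_{t,a} the potential reward of user t for arm a. *)

Section AdaPTT.
Context {R : realType}.

Definition fupd {T : Type} (f : nat -> T) (a : nat) (v : T) : nat -> T :=
  fun b => if b == a then v else f b.

Definition argmax_in (f : nat -> R) (l : seq nat) : nat :=
  foldl (fun b i => if f b < f i then i else b) (head 0%N l) l.
Definition argmin_in (f : nat -> R) (l : seq nat) : nat :=
  foldl (fun b i => if f i < f b then i else b) (head 0%N l) l.

Record st := St {
  s_n : nat;
  s_cnt : nat -> nat;        (* N_{n,a} *)
  s_k : nat -> nat;          (* phase index k_a *)
  s_c0 : nat -> nat;         (* N_{T_{k_a}(a),a} *)
  s_Nt : nat -> nat;         (* tilde N_{k_a,a} *)
  s_mu : nat -> R;           (* tilde mu_{k_a,a} *)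
  s_sum : nat -> R;          (* sum of rewards of a over rounds T_{k_a}(a) .. n-1 *)
  s_L : nat -> nat;          (* L_{n,a} *)
  s_NB : nat -> nat -> nat;  (* N^a_{n,b} *)
  s_j : nat;                 (* index of the next unused standard noise draw *)
  s_pulls : seq nat          (* I_1, ..., I_{n-1} *)
}.

Variables (K : nat) (beta delta eps : R)
  (c : R -> nat -> nat -> nat -> nat -> R -> R)  (* c eps k1 k2 N1 N2 delta *)
  (d : nat -> nat -> R)
  (z : seq R).                                    (* i.i.d. Laplace(1) draws *)

(* The j-th noise draw of the run is z_j / (eps * tilde N), which is
   Laplace(1/(eps tilde N)) distributed when z_j ~ Laplace(1). *)

Definition phase_upd (s : st) (a : nat) : st :=
  if (2 * s_c0 s a <= s_cnt s a)%N then
    let Nt := (s_cnt s a - s_c0 s a)%N in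
    let hat := s_sum s a / Nt%:R in
    let y := nth 0 z (s_j s) / (eps * Nt%:R) in
    St (s_n s) (s_cnt s) (fupd (s_k s) a (s_k s a).+1)
       (fupd (s_c0 s) a (s_cnt s a)) (fupd (s_Nt s) a Nt)
       (fupd (s_mu s) a (hat + y)) (fupd (s_sum s) a 0)
       (s_L s) (s_NB s) (s_j s).+1 (s_pulls s)
  else s.

Definition round (s0 : st) : (nat * nat) + st :=
  let s := foldl phase_upd s0 (iota 0 K) in
  let arms := iota 0 K in
  let ahat := argmax_in (s_mu s) arms in
  let glr b := (s_mu s ahat - s_mu s b) ^+ 2
                 / ((s_Nt s ahat)%:R^-1 + (s_Nt s b)%:R^-1) in
  if all (fun b => (b == ahat) ||
        (2 * c eps (s_k s ahat) (s_k s b) (s_Nt s ahat) (s_Nt s b) delta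
           <= glr b)) arms
  then inl (s_n s, ahat)
  else
    let idx a := s_mu s a + Num.sqrt ((s_k s a)%:R / (s_Nt s a)%:R)
                 + (s_k s a)%:R / (eps * (s_Nt s a)%:R) in
    let B := argmax_in idx arms in
    let tc a := (s_mu s B - s_mu s a)
                / Num.sqrt ((s_cnt s B)%:R^-1 + (s_cnt s a)%:R^-1) in
    let C := argmin_in tc [seq a <- arms | a != B] in
    let I := if (s_NB s B B)%:R <= beta * ((s_L s B).+1)%:R then B else C in
    let X := d (s_n s) I in
    inr (St (s_n s).+1 (fupd (s_cnt s) I (s_cnt s I).+1) (s_k s) (s_c0 s)
            (s_Nt s) (s_mu s) (fupd (s_sum s) I (s_sum s I + X))
            (fupd (s_L s) B (s_L s B).+1)
            (fun a b => if (a == B) && (b == I) then (s_NB s a b).+1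
                        else s_NB s a b)
            (s_j s) (rcons (s_pulls s) I)).

(* State after rounds 1..K (arm a-1 pulled at round a), at round K+1. *)
Definition init : st :=
  St K.+1 (fun _ => 1%N) (fun _ => 1%N) (fun _ => 1%N) (fun _ => 1%N)
     (fun a => d a.+1 a + nth 0 z a / eps) (fun _ => 0)
     (fun _ => 0%N) (fun _ _ => 0%N) K (iota 0 K).

Fixpoint sim (fuel : nat) (s : st) : seq nat * option (nat * nat) :=
  match fuel with
  | 0 => (s_pulls s, None)
  | f.+1 => match round s with
            | inl o => (s_pulls s, Some o)
            | inr s' => sim f s'
            end
  end.

(* The run pulls exactly a_1..a_T, then (at round T+1) stops and recommends ahat. *)
Definition traj_event (a : seq nat) (ahat T : nat) : bool :=
  sim T.+1 init == (a, Some (T.+1, ahat)).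

End AdaPTT.

Definition lap_pdf {R : realType} (b x : R) : R := (2 * b)^-1 * expR (- `|x| / b).

(* iterated integral against m i.i.d. Laplace(1) coordinates z_0 (outermost), z_1, ... *)
Fixpoint iint {R : realType} (m : nat) (F : seq R -> \bar R) : \bar R :=
  match m with
  | 0 => F [::]
  | m'.+1 => (\int[@lebesgue_measure R]_(y in [set: R])
               ((lap_pdf 1 y)%:E * iint m' (fun s => F (y :: s))))%E
  end.

(* pi(a^T, ahat, T | d^T): the run up to round T+1 uses at most
   K * (T+2) noise draws (each arm has at most log2 T + 1 phases), so
   integrating over K*(T+2) i.i.d. Laplace(1) draws gives the probability. *)
Definition traj_prob {R : realType} (K : nat) (beta delta eps : R)
  (c : R -> nat -> nat -> nat -> nat -> R -> R) (d : nat -> nat -> R)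
  (a : seq nat) (ahat T : nat) : \bar R :=
  iint (K * T.+2) (fun z =>
    (if traj_event K beta delta eps c d z a ahat T then 1 else 0)%:E).

From HB Require Import structures.
From mathcomp Require Import all_boot all_order all_algebra.
From mathcomp Require Import all_classical all_reals all_analysis.
From mathcomp Require Import ring lra zify.
Import Order.TTheory GRing.Theory Num.Theory.
Local Open Scope ring_scope.

Section ge0_integralT.
Import HBNNSimple.
Local Open Scope ereal_scope.
Context d (T : measurableType d) (R : realType) (mu : {measure set T -> \bar R}).

Lemma ge0_le_integralT (f g : T -> \bar R) : (forall x, 0 <= f x) ->
  (forall x, f x <= g x) -> \int[mu]_x f x <= \int[mu]_x g x.
Proof.
move=> f0 fg; have g0 x : 0 <= g x := le_trans (f0 x) (fg x).
rewrite !ge0_integralTE //; apply: ge_ereal_sup => _ [h hf <-].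
by apply: ereal_sup_ubound; exists h => // x; exact: le_trans (hf x) (fg x).
Qed.

Lemma ge0_integralTZl_le (k : R) (f : T -> \bar R) : (0 < k)%R ->
  (forall x, 0 <= f x) -> \int[mu]_x (k%:E * f x) <= k%:E * \int[mu]_x f x.
Proof.
move=> k0 f0; have kf0 x : 0 <= k%:E * f x by apply: mule_ge0 => //; rewrite lee_fin ltW.
rewrite !ge0_integralTE //; apply: ge_ereal_sup => _ [h hf <-].
have k'0 : (0 <= k^-1)%R by rewrite invr_ge0 ltW.
have -> : sintegral mu h = k%:E * sintegral mu (scale_nnsfun h k'0).
  by rewrite -sintegralrM; apply: eq_sintegral => x /=; rewrite mulrA divff ?gt_eqF ?mul1r.
rewrite lee_pmul2l ?lte_fin //; apply: ereal_sup_ubound; exists (scale_nnsfun h k'0) => // x /=.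
rewrite EFinM; apply: le_trans (lee_wpmul2l _ (hf x)) _; first by rewrite lee_fin.
by rewrite muleA -EFinM mulVf ?gt_eqF // mul1e.
Qed.

Lemma ge0_integralTZl (k : R) (f : T -> \bar R) : (0 < k)%R ->
  (forall x, 0 <= f x) -> \int[mu]_x (k%:E * f x) = k%:E * \int[mu]_x f x.
Proof.
move=> k0 f0; apply/le_anti; rewrite ge0_integralTZl_le //=.
have k'0 : (0 < k^-1)%R by rewrite invr_gt0.
rewrite -lee_pdivlMl //.
have kf0 x : 0 <= k%:E * f x by apply: mule_ge0 => //; rewrite lee_fin ltW.
apply: le_trans _ (ge0_integralTZl_le _ _ k'0 kf0); apply: ge0_le_integralT => // x.
by rewrite muleA -EFinM mulVf ?gt_eqF // mul1e.
Qed.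

End ge0_integralT.

Section lebesgue_translation.
Import HBNNSimple.
Local Open Scope classical_set_scope.
Local Open Scope ereal_scope.
Context (R : realType).

Lemma lebesgue_measure_addr_preimage (t : R) (A : set R) : measurable A ->
  lebesgue_measure ((fun x : R => x + t)%R @^-1` A) = lebesgue_measure A.
Proof.
move=> mA; apply/esym.
apply: (@lebesgue_measure_unique R
  (pushforward lebesgue_measure (fun x : measurableTypeR R => (x + t : measurableTypeR R))%R)) => //.
  by apply: measurable_realfun.measurable_funD => //; exact: measurable_cst.
move=> mf _ [[a b] _ <-].
change (lebesgue_measure (`]a, b] : set R) = lebesgue_measure ((fun x : R => x + t)%R @^-1` `]a, b])).
have -> : (fun x : R => x + t)%R @^-1` `]a, b] = `](a - t)%R, (b - t)%R] :> set R.
  by apply/seteqP; split => x; rewrite /= !in_itv /= ltrBlDr lerBrDr.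
rewrite !lebesgue_measure_itv /= !lte_fin ltrD2r.
by case: ifP => // _; rewrite -!EFinD; congr (_%:E); lra.
Qed.

Section nnsfun_translation.
Variables (t : R) (h : {nnsfun measurableTypeR R >-> R}).

Definition nnsfun_translate : measurableTypeR R -> R := fun x => h (x + t)%R.

Let measurable_translate : measurable_fun setT nnsfun_translate.
Proof.
apply: (measurableT_comp (f := h) (g := fun x : R => x + t)%R); first exact: measurable_funPT.
by apply: measurable_realfun.measurable_funD => //; exact: measurable_cst.
Qed.
HB.instance Definition _ :=
  isMeasurableFun.Build _ _ _ _ nnsfun_translate measurable_translate.

Let finite_range_translate : finite_set (range nnsfun_translate).
Proof.
by apply: sub_finite_set (fimfunP h) => _ [x _ <-]; exists (x + t)%R.
Qed.
HB.instance Definition _ := @FiniteImage.Build _ _ _ finite_range_translate.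

Let translate_ge0 x : (0 <= nnsfun_translate x)%R. Proof. by []. Qed.
HB.instance Definition _ := @isNonNegFun.Build _ _ _ translate_ge0.

Lemma sintegral_translate :
  sintegral lebesgue_measure (nnsfun_translate : {nnsfun _ >-> R}) =
  sintegral lebesgue_measure h.
Proof.
apply: eq_fsbigr => r _; congr (_ * _).
by apply: lebesgue_measure_addr_preimage; exact: (measurable_funPTI h (measurable_set1 r)).
Qed.

End nnsfun_translation.

Lemma ge0_integralT_translate_le (f : R -> \bar R) (t : R) : (forall x, 0 <= f x) ->
  \int[lebesgue_measure]_x f (x + t)%R <= \int[lebesgue_measure]_x f x.
Proof.
move=> f0; rewrite !ge0_integralTE //; apply: ge_ereal_sup => _ [h hf <-].
rewrite -(sintegral_translate (- t) h); apply: ereal_sup_ubound.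
by exists (nnsfun_translate (- t) h) => // x; have := hf (x - t)%R; rewrite subrK.
Qed.

Lemma ge0_integralT_translate (f : R -> \bar R) (t : R) : (forall x, 0 <= f x) ->
  \int[lebesgue_measure]_x f (x + t)%R = \int[lebesgue_measure]_x f x.
Proof.
move=> f0; apply/le_anti; rewrite ge0_integralT_translate_le //=.
under [leLHS]eq_integral do rewrite -[x in f x](subrK t).
exact: (ge0_integralT_translate_le (fun x => f (x + t)%R) (- t)).
Qed.

End lebesgue_translation.

Section laplace_products.
Local Open Scope ereal_scope.
Context {R : realType}.

Lemma lap_pdf_ge0 (b y : R) : (0 <= b)%R -> (0 <= lap_pdf b y)%R.
Proof. by move=> b0; rewrite /lap_pdf mulr_ge0 ?expR_ge0 // invr_ge0 mulr_ge0. Qed.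

Lemma lap_pdf_addr_le (b t y : R) : (0 < b)%R ->
  (lap_pdf b y <= expR (`|t| / b) * lap_pdf b (y + t))%R.
Proof.
move=> b0; rewrite /lap_pdf mulrCA ler_pM2l ?invr_gt0 ?mulr_gt0 //.
rewrite -expRD ler_expR -mulrDl ler_pM2r ?invr_gt0 //.
by have := ler_normD y t; lra.
Qed.

Definition perturb_nth (j : nat) (t : R) (z : seq R) : seq R :=
  set_nth 0%R z j (nth 0%R z j + t)%R.

Lemma nth_perturb_nth j t z i :
  nth 0%R (perturb_nth j t z) i = (nth 0%R z i + (if i == j then t else 0))%R.
Proof. by rewrite nth_set_nth /=; case: ifP => [/eqP ->|_]; rewrite ?addr0. Qed.

Lemma iint_ge0 m (F : seq R -> \bar R) : (forall z, 0 <= F z) -> 0 <= iint m F.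
Proof.
elim: m F => [|m IH] F F0 /=; first exact: F0.
apply: integral_ge0 => y _; apply: mule_ge0; first by rewrite lee_fin lap_pdf_ge0.
exact: IH.
Qed.

Lemma le_iint m (F G : seq R -> \bar R) : (forall z, 0 <= F z) ->
  (forall z, F z <= G z) -> iint m F <= iint m G.
Proof.
elim: m F G => [|m IH] F G F0 FG /=; first exact: FG.
apply: ge0_le_integralT => [y|y].
  by apply: mule_ge0; [rewrite lee_fin lap_pdf_ge0 | exact: iint_ge0].
by apply: lee_wpmul2l; [rewrite lee_fin lap_pdf_ge0 | exact: IH].
Qed.

Lemma iint_perturb_le m (F G : seq R -> \bar R) (j : nat) (t : R) : (j < m)%N ->
  (forall z, 0 <= F z) -> (forall z, 0 <= G z) ->
  (forall z, F z <= G (perturb_nth j t z)) ->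
  iint m F <= (expR `|t|)%:E * iint m G.
Proof.
elim: m F G j => [//|m IH] F G j jm F0 G0 FG /=.
have lap0 (y : R) : 0 <= (lap_pdf 1 y)%:E by rewrite lee_fin lap_pdf_ge0.
pose g (y : R) := (lap_pdf 1 y)%:E * iint m (fun s => G (y :: s)).
have g0 y : 0 <= g y by apply: mule_ge0 => //; exact: iint_ge0.
rewrite -ge0_integralTZl ?expR_gt0 //.
case: j jm FG => [|j] jm FG.
  rewrite -(@ge0_integralT_translate _ (fun y => (expR `|t|)%:E * g y) t); last first.
    by move=> y; apply: mule_ge0; rewrite ?lee_fin ?expR_ge0.
  apply: ge0_le_integralT => y; first by apply: mule_ge0 => //; exact: iint_ge0.
  rewrite /g muleA -EFinM; apply: lee_pmul => //; first exact: iint_ge0.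
    by rewrite lee_fin -[X in expR X]divr1 lap_pdf_addr_le.
  by apply: le_iint => // s; exact: (FG (y :: s)).
apply: ge0_le_integralT => y; first by apply: mule_ge0 => //; exact: iint_ge0.
rewrite /g muleCA; apply: lee_wpmul2l => //.
by apply: (IH _ _ j) => // s; exact: (FG (y :: s)).
Qed.

End laplace_products.

Section select.
Context {T : eqType}.
Implicit Types (p q : T -> T -> bool) (l L : seq T).

Definition select_foldl p (acc : T) l := foldl (fun b i => if p b i then i else b) acc l.

Lemma select_foldl_mem p acc l : select_foldl p acc l \in acc :: l.
Proof.
elim: l acc => [|i l IH] acc /=; first by rewrite mem_head.
have := IH (if p acc i then i else acc); rewrite /select_foldl /=.
by case: ifP => _; rewrite !in_cons => /orP[->|->]; rewrite ?orbT.
Qed.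

Lemma eq_in_select_foldl p q L acc l : {in L &, p =2 q} ->
  {subset acc :: l <= L} -> select_foldl p acc l = select_foldl q acc l.
Proof.
move=> pq; elim: l acc => //= i l IH acc sub.
have [accL iL] : acc \in L /\ i \in L by split; apply: sub; rewrite !inE eqxx ?orbT.
rewrite /select_foldl /= pq //; apply: IH => x; rewrite in_cons.
by case/orP=> [/eqP->|xl]; [case: ifP | apply: sub; rewrite !in_cons xl !orbT].
Qed.

End select.

Section argmax_in.
Context {R : realType}.
Implicit Types (f g : nat -> R) (l : seq nat).

Lemma argmax_in_mem f l : l != [::] -> argmax_in f l \in l.
Proof.
case: l => [//|x l] _; have := select_foldl_mem (fun b i => f b < f i) x (x :: l).
by rewrite /argmax_in /select_foldl /= in_cons => /orP[/eqP->|]; rewrite ?mem_head.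
Qed.

Lemma argmax_in_iota_lt f n : (0 < n)%N -> (argmax_in f (iota 0 n) < n)%N.
Proof.
by case: n => // n _; have := argmax_in_mem f (iota 0 n.+1) isT; rewrite mem_iota.
Qed.

Lemma eq_in_argmax_in f g l : {in l, f =1 g} -> argmax_in f l = argmax_in g l.
Proof.
case: l => [//|x l] fg; apply: (@eq_in_select_foldl _ _ _ (x :: l)).
  by move=> a b aL bL /=; rewrite fg // fg.
by move=> y; rewrite in_cons => /orP[/eqP->|]; rewrite ?mem_head.
Qed.

Lemma eq_in_argmin_in f g l : {in l, f =1 g} -> argmin_in f l = argmin_in g l.
Proof.
case: l => [//|x l] fg; apply: (@eq_in_select_foldl _ _ _ (x :: l)).
  by move=> a b aL bL /=; rewrite fg // fg.
by move=> y; rewrite in_cons => /orP[/eqP->|]; rewrite ?mem_head.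
Qed.

End argmax_in.

Section adap_tt.
Context {R : realType} (K : nat) (beta delta eps : R)
  (c : R -> nat -> nat -> nat -> nat -> R -> R).
Local Notation state := (@st R).
Local Notation sim := (sim K beta delta eps c).
Implicit Types (s : state) (z : seq R) (d : nat -> nat -> R).

Definition phase_updates z s := foldl (phase_upd eps z) s (iota 0 K).

Definition recommendation s := argmax_in (s_mu s) (iota 0 K).

Definition stop_rule s :=
  let ahat := recommendation s in
  all (fun b => (b == ahat) ||
        (2 * c eps (s_k s ahat) (s_k s b) (s_Nt s ahat) (s_Nt s b) delta
           <= (s_mu s ahat - s_mu s b) ^+ 2
                / ((s_Nt s ahat)%:R^-1 + (s_Nt s b)%:R^-1))) (iota 0 K).

Definition leader s :=
  argmax_in (fun a => s_mu s a + Num.sqrt ((s_k s a)%:R / (s_Nt s a)%:R)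
                      + (s_k s a)%:R / (eps * (s_Nt s a)%:R)) (iota 0 K).

Definition challenger s :=
  let B := leader s in
  argmin_in (fun a => (s_mu s B - s_mu s a)
                      / Num.sqrt ((s_cnt s B)%:R^-1 + (s_cnt s a)%:R^-1))
            [seq a <- iota 0 K | a != B].

Definition pulled_arm s :=
  if (s_NB s (leader s) (leader s))%:R <= beta * ((s_L s (leader s)).+1)%:R
  then leader s else challenger s.

Definition pull s (X : R) : state :=
  let B := leader s in let I := pulled_arm s in
  St (s_n s).+1 (fupd (s_cnt s) I (s_cnt s I).+1) (s_k s) (s_c0 s)
     (s_Nt s) (s_mu s) (fupd (s_sum s) I (s_sum s I + X))
     (fupd (s_L s) B (s_L s B).+1)
     (fun a b => if (a == B) && (b == I) then (s_NB s a b).+1 else s_NB s a b)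
     (s_j s) (rcons (s_pulls s) I).

Lemma roundE d z s : round K beta delta eps c d z s =
  let s' := phase_updates z s in
  if stop_rule s' then inl (s_n s', recommendation s')
  else inr (pull s' (d (s_n s') (pulled_arm s'))).
Proof. by []. Qed.

Lemma simS d z f s : sim d z f.+1 s =
  match round K beta delta eps c d z s with
  | inl o => (s_pulls s, Some o)
  | inr s' => sim d z f s'
  end.
Proof. by []. Qed.

Definition trim s : state :=
  St (s_n s) (s_cnt s) (s_k s) (s_c0 s) (s_Nt s)
     (fun a => if (a < K)%N then s_mu s a else 0)
     (s_sum s) (s_L s) (s_NB s) (s_j s) (s_pulls s).

Section trim.
Hypothesis K_gt0 : (0 < K)%N.

Lemma recommendation_lt s : (recommendation s < K)%N.
Proof. exact: argmax_in_iota_lt. Qed.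

Lemma leader_lt s : (leader s < K)%N.
Proof. exact: argmax_in_iota_lt. Qed.

Lemma recommendation_trim s : recommendation (trim s) = recommendation s.
Proof. by apply: eq_in_argmax_in => a; rewrite mem_iota /= => ->. Qed.

Lemma leader_trim s : leader (trim s) = leader s.
Proof. by apply: eq_in_argmax_in => a; rewrite mem_iota /= => ->. Qed.

Lemma stop_rule_trim s : stop_rule (trim s) = stop_rule s.
Proof.
rewrite /stop_rule recommendation_trim; apply: eq_in_all => b.
by rewrite mem_iota /= => bK; rewrite bK recommendation_lt.
Qed.

Lemma pulled_arm_trim s : pulled_arm (trim s) = pulled_arm s.
Proof.
rewrite /pulled_arm /challenger leader_trim /=; congr (if _ then _ else _).
apply: eq_in_argmin_in => a; rewrite mem_filter mem_iota /= => /andP[_ aK].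
by rewrite aK leader_lt.
Qed.

Lemma pull_trim s X : pull (trim s) X = trim (pull s X).
Proof. by rewrite /pull pulled_arm_trim leader_trim. Qed.

Lemma phase_upd_trim z s a : (a < K)%N ->
  phase_upd eps z (trim s) a = trim (phase_upd eps z s a).
Proof.
move=> aK; rewrite /phase_upd /=; case: ifP => // _; rewrite /trim /=; congr St.
by apply/funext => x; rewrite /fupd; case: eqP => // ->; rewrite aK.
Qed.

Lemma phase_updates_trim z s : phase_updates z (trim s) = trim (phase_updates z s).
Proof.
rewrite /phase_updates; have : all (fun a => a < K)%N (iota 0 K).
  by apply/allP => a; rewrite mem_iota.
elim: (iota 0 K) s => //= a l IH s /andP[aK lK].
by rewrite phase_upd_trim // IH.
Qed.

Lemma sim_trim d z f s : sim d z f (trim s) = sim d z f s.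
Proof.
elim: f s => // f IH s; rewrite !simS !roundE /= phase_updates_trim stop_rule_trim.
case: ifP => _; first by rewrite recommendation_trim.
by rewrite pulled_arm_trim pull_trim IH.
Qed.

End trim.

Record skel := Skel { sk_cnt : nat -> nat; sk_c0 : nat -> nat; sk_j : nat }.

Definition skel_of s := Skel (s_cnt s) (s_c0 s) (s_j s).

Definition skel_phase (k : skel) (a : nat) : skel :=
  if (2 * sk_c0 k a <= sk_cnt k a)%N
  then Skel (sk_cnt k) (fupd (sk_c0 k) a (sk_cnt k a)) (sk_j k).+1 else k.

Definition skel_pull (k : skel) (a : nat) : skel :=
  Skel (fupd (sk_cnt k) a (sk_cnt k a).+1) (sk_c0 k) (sk_j k).

Lemma skel_of_phase_upd z s a : skel_of (phase_upd eps z s a) = skel_phase (skel_of s) a.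
Proof. by rewrite /phase_upd /skel_phase /=; case: ifP. Qed.

Lemma skel_of_phases z s l :
  skel_of (foldl (phase_upd eps z) s l) = foldl skel_phase (skel_of s) l.
Proof. by elim: l s => //= a l IH s; rewrite IH skel_of_phase_upd. Qed.

Lemma skel_of_pull s X : skel_of (pull s X) = skel_pull (skel_of s) (pulled_arm s).
Proof. by []. Qed.

Lemma sk_j_phases k l : (sk_j k <= sk_j (foldl skel_phase k l) <= sk_j k + size l)%N.
Proof.
elim: l k => /= [|a l IH] k; first by rewrite addn0 leqnn.
have /andP[h1 h2] := IH (skel_phase k a).
have /andP[h3 h4] : (sk_j k <= sk_j (skel_phase k a) <= (sk_j k).+1)%N.
  by rewrite /skel_phase; case: ifP => _ /=; rewrite ?leqnn ?leqnSn.
by rewrite (leq_trans h3 h1) /= (leq_trans h2) // addnS -addSn leq_add2r.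
Qed.

Lemma sk_c0_phases_notin k l a : a \notin l -> sk_c0 (foldl skel_phase k l) a = sk_c0 k a.
Proof.
elim: l k => //= x l IH k; rewrite in_cons negb_or => /andP[ax al].
by rewrite IH // /skel_phase; case: ifP => //= _; rewrite /fupd (negbTE ax).
Qed.

Lemma phases_fixed z s l : [/\ s_n (foldl (phase_upd eps z) s l) = s_n s,
  s_pulls (foldl (phase_upd eps z) s l) = s_pulls s &
  s_cnt (foldl (phase_upd eps z) s l) = s_cnt s].
Proof.
elim: l s => //= a l IH s; have [-> -> ->] := IH (phase_upd eps z s a).
by rewrite /phase_upd; case: ifP.
Qed.

Lemma s_j_phases z s l : (s_j s <= s_j (foldl (phase_upd eps z) s l))%N.
Proof. by have /andP[] := sk_j_phases (skel_of s) l; rewrite -(skel_of_phases z). Qed.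

Lemma eq_phase_upd z z' s a :
  ((2 * s_c0 s a <= s_cnt s a)%N -> nth 0 z (s_j s) = nth 0 z' (s_j s)) ->
  phase_upd eps z s a = phase_upd eps z' s a.
Proof. by rewrite /phase_upd; case: ifP => // _ ->. Qed.

Lemma phase_upd_draw_used k a l : (2 * sk_c0 k a <= sk_cnt k a)%N ->
  (sk_j k < sk_j (foldl skel_phase (skel_phase k a) l))%N.
Proof.
by move=> close; have /andP[+ _] := sk_j_phases (skel_phase k a) l; rewrite /skel_phase close.
Qed.

Lemma eq_phases z z' s l :
  {in [pred i | s_j s <= i < sk_j (foldl skel_phase (skel_of s) l)]%N,
    forall i, nth 0 z i = nth 0 z' i} ->
  foldl (phase_upd eps z) s l = foldl (phase_upd eps z') s l.
Proof.
elim: l s => //= a l IH s zz'.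
rewrite (@eq_phase_upd z z') => [|close]; last by rewrite zz' // inE leqnn; exact: phase_upd_draw_used.
apply: IH => i; rewrite inE skel_of_phase_upd => /andP[i1 i2].
by apply: zz'; rewrite inE i2 andbT (leq_trans (s_j_phases z' s [:: a])).
Qed.

Definition add_sum (b : nat) (D : R) s : state :=
  St (s_n s) (s_cnt s) (s_k s) (s_c0 s) (s_Nt s) (s_mu s)
     (fun a => s_sum s a + (if a == b then D else 0))
     (s_L s) (s_NB s) (s_j s) (s_pulls s).

Lemma pulled_arm_add_sum b D s : pulled_arm (add_sum b D s) = pulled_arm s.
Proof. by []. Qed.

Lemma pull_add_sum b D s X : pull (add_sum b D s) X = add_sum b D (pull s X).
Proof.
rewrite /pull /add_sum /=; congr St; apply/funext => x; rewrite /fupd.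
by case: eqP => // ->; rewrite addrAC.
Qed.

Lemma pull_pulled_arm s X X' :
  pull s X = add_sum (pulled_arm s) (X - X') (pull s X').
Proof.
rewrite /pull /add_sum /=; congr St; apply/funext => x; rewrite /fupd.
by case: eqP => _; rewrite ?addr0 //; lra.
Qed.

Lemma phase_upd_add_sum z s a b D : a != b ->
  phase_upd eps z (add_sum b D s) a = add_sum b D (phase_upd eps z s a).
Proof.
move=> /negbTE ab; rewrite /phase_upd /=; case: ifP => // _.
rewrite /add_sum /=; congr St; apply/funext => x; rewrite /fupd.
  by case: ifP => // _; rewrite ab addr0.
by case: ifP => // /eqP ->; rewrite ab addr0.
Qed.

Lemma phase_upd_add_sum_idle z s b D : ~~ (2 * s_c0 s b <= s_cnt s b)%N ->
  phase_upd eps z (add_sum b D s) b = add_sum b D (phase_upd eps z s b).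
Proof. by move=> /negbTE idle; rewrite /phase_upd /= idle. Qed.

Lemma phase_upd_absorb z z' s b D : eps != 0 -> (2 * s_c0 s b <= s_cnt s b)%N ->
  nth 0 z' (s_j s) = nth 0 z (s_j s) + eps * D ->
  phase_upd eps z (add_sum b D s) b = phase_upd eps z' s b.
Proof.
move=> eps_neq0 close z'_shift; rewrite /phase_upd /= close z'_shift.
have absorb (S Y N : R) : (S + D) / N + Y / (eps * N) = S / N + (Y + eps * D) / (eps * N).
  have [->|N0] := eqVneq N 0; first by rewrite mulr0 !invr0 !mulr0.
  by field; apply/andP.
congr St; apply/funext => x; rewrite /fupd.
  by case: ifP => // _; rewrite eqxx absorb.
by case: ifP => // xb; rewrite xb addr0.
Qed.

Lemma phases_add_sum z z' s l b D : (b \in l -> ~~ (2 * s_c0 s b <= s_cnt s b)%N) ->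
  {in [pred i | s_j s <= i < sk_j (foldl skel_phase (skel_of s) l)]%N,
    forall i, nth 0 z i = nth 0 z' i} ->
  foldl (phase_upd eps z) (add_sum b D s) l = add_sum b D (foldl (phase_upd eps z') s l).
Proof.
elim: l s => //= a l IH s idle zz'.
rewrite (@eq_phase_upd z z') => [|close]; last by rewrite zz' // inE leqnn; exact: phase_upd_draw_used.
have [eab|ab] := eqVneq a b; first subst a.
  have /negbTE idle_b := idle (mem_head _ _).
  have idle_s : phase_upd eps z' s b = s by rewrite /phase_upd idle_b.
  have idle_k : skel_phase (skel_of s) b = skel_of s by rewrite /skel_phase idle_b.
  rewrite phase_upd_add_sum_idle ?idle_b // idle_s; rewrite idle_k in zz'.
  by apply: IH => // _; rewrite idle_b.
rewrite phase_upd_add_sum //; apply: IH => [bl|i].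
  rewrite /phase_upd; case: ifP => _ //=; last by apply: idle; rewrite in_cons bl orbT.
  by rewrite /fupd eq_sym (negbTE ab); apply: idle; rewrite in_cons bl orbT.
rewrite inE skel_of_phase_upd => /andP[i1 i2].
by apply: zz'; rewrite inE i2 andbT (leq_trans (s_j_phases z' s [:: a])).
Qed.

Lemma phase_updates_absorb z z' s b D : eps != 0 -> (b < K)%N ->
  (2 * s_c0 s b <= s_cnt s b)%N ->
  let J := sk_j (foldl skel_phase (skel_of s) (iota 0 b)) in
  nth 0 z' J = nth 0 z J + eps * D ->
  {in [pred i | s_j s <= i]%N, forall i, i != J -> nth 0 z i = nth 0 z' i} ->
  phase_updates z (add_sum b D s) = phase_updates z' s /\
  (J < s_j (phase_updates z' s))%N.
Proof.
move=> eps_neq0 bK close J z'J zz'.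
have b_notin : b \in iota 0 b = false by rewrite mem_iota ltnn andbF.
rewrite /phase_updates -(subnKC (ltnW bK)) iotaD -(subnSK bK) /= !foldl_cat /=.
rewrite (@phases_add_sum z z') ?b_notin //; last first.
  move=> i /andP[i1 i2]; apply: zz' => //; rewrite neq_ltn.
  by rewrite /J i2.
set Sb := foldl (phase_upd eps z') s (iota 0 b).
have [_ _ cntSb] := phases_fixed z' s (iota 0 b).
have c0Sb : s_c0 Sb b = s_c0 s b.
  by have := f_equal sk_c0 (skel_of_phases z' s (iota 0 b)) => /= ->; rewrite sk_c0_phases_notin ?b_notin.
have jSb : s_j Sb = J by rewrite /J -(skel_of_phases z').
have closeSb : (2 * s_c0 Sb b <= s_cnt Sb b)%N by rewrite c0Sb cntSb.
rewrite (@phase_upd_absorb z z') ?jSb //.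
have jSb' : s_j (phase_upd eps z' Sb b) = J.+1 by rewrite /phase_upd closeSb /= jSb.
split; last by rewrite -jSb' s_j_phases.
apply: eq_phases => i /andP[i1 _]; apply: zz'; last by rewrite neq_ltn -jSb' i1 orbT.
by rewrite inE (leq_trans (s_j_phases z' s (iota 0 b))) // jSb ltnW // -jSb'.
Qed.

Lemma sim_prefix {d z f s P o} : sim d z f s = (P, Some o) ->
  exists r, P = s_pulls s ++ r.
Proof.
elim: f s => // f IH s; rewrite simS roundE /=; case: ifP => _.
  by case=> <- _; exists [::]; rewrite cats0.
move/IH => [r ->]; exists (pulled_arm (phase_updates z s) :: r).
by rewrite /= cat_rcons; have [_ -> _] := phases_fixed z s (iota 0 K).
Qed.

Section skel_after.
Variable A : seq nat.

Fixpoint skel_after (k : nat) : skel :=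
  if k is k'.+1 then
    skel_pull (foldl skel_phase (skel_after k') (iota 0 K)) (nth 0%N A (K + k'))
  else Skel (fun _ => 1%N) (fun _ => 1%N) K.

Lemma sk_j_after_mono k k' : (k <= k')%N -> (sk_j (skel_after k) <= sk_j (skel_after k'))%N.
Proof.
move/subnK <-; elim: (k' - k)%N => // n IH; apply: leq_trans IH _.
by have /andP[] := sk_j_phases (skel_after (n + k)) (iota 0 K).
Qed.

Lemma sk_j_after_le k : (sk_j (skel_after k) <= K + K * k)%N.
Proof.
elim: k => [|k IH] /=; first by rewrite muln0 addn0.
have /andP[_] := sk_j_phases (skel_after k) (iota 0 K); rewrite size_iota mulnS; lia.
Qed.

Lemma skel_of_round z s X k : skel_of s = skel_after k ->
  pulled_arm (phase_updates z s) = nth 0%N A (K + k) ->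
  skel_of (pull (phase_updates z s) X) = skel_after k.+1.
Proof. by rewrite skel_of_pull /phase_updates skel_of_phases => -> ->. Qed.

Variable b : nat.

Definition skel_closes k := (2 * sk_c0 (skel_after k) b <= sk_cnt (skel_after k) b)%N.

Definition skel_draw k := sk_j (foldl skel_phase (skel_after k) (iota 0 b)).

Lemma skel_draw_lt k : (b < K)%N -> (skel_draw k < K * k.+2)%N.
Proof.
move=> b_lt; have := sk_j_after_le k; have /andP[_] := sk_j_phases (skel_after k) (iota 0 b).
by rewrite /skel_draw size_iota !mulnS; lia.
Qed.

Fixpoint closing_draw (f k : nat) : option nat :=
  if f is f'.+1 then
    if skel_closes k then Some (skel_draw k) else closing_draw f' k.+1
  else None.

Lemma closing_draw_ge {f k J} : closing_draw f k = Some J -> (sk_j (skel_after k) <= J)%N.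
Proof.
elim: f k => //= f IH k; case: ifP => _.
  by case=> <-; have /andP[] := sk_j_phases (skel_after k) (iota 0 b).
by move/IH; apply: leq_trans; exact: sk_j_after_mono.
Qed.

Lemma closing_drawP {f k J} : closing_draw f k = Some J ->
  exists2 k', (k' < k + f)%N & J = skel_draw k'.
Proof.
elim: f k => //= f IH k; case: ifP => _.
  by case=> <-; exists k; rewrite // addnS ltnS leq_addr.
by move/IH => [k' k'lt ->]; exists k'; rewrite // addnS -addSn.
Qed.

End skel_after.

Section coupled_runs.
Variables (d d' : nat -> nat -> R) (z z' : seq R) (A : seq nat) (T t0 j : nat)
  (del : R) (o : nat * nat).
Hypotheses (K_gt0 : (0 < K)%N) (size_A : size A = T) (A_lt : all (fun a => a < K)%N A).
Hypothesis dd' : forall n a, (1 <= n <= T)%N -> n != t0 -> (a < K)%N -> d n a = d' n a.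
Hypothesis nth_z' : forall i, nth 0 z' i = nth 0 z i + (if i == j then del else 0).

Lemma pulled_arm_nth {e y f S X} : sim e y f (pull S X) = (A, Some o) ->
  s_n S = (size (s_pulls S)).+1 ->
  [/\ pulled_arm S = nth 0%N A (s_n S).-1, (s_n S <= T)%N & (pulled_arm S < K)%N].
Proof.
move/sim_prefix => [r]; rewrite /pull /= cat_rcons => EA ->.
have hs : (size (s_pulls S) < T)%N by rewrite -size_A EA size_cat /= addnS ltnS leq_addr.
have hI : nth 0%N A (size (s_pulls S)) = pulled_arm S by rewrite EA nth_cat ltnn subnn.
by split => //; rewrite -hI; apply: (allP A_lt); apply: mem_nth; rewrite size_A.
Qed.

Lemma reward_unchanged {e y f S X} : s_n S != t0 -> s_n S = (size (s_pulls S)).+1 ->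
  sim e y f (pull S X) = (A, Some o) ->
  d (s_n S) (pulled_arm S) = d' (s_n S) (pulled_arm S).
Proof.
move=> not_t0 synced /pulled_arm_nth/(_ synced)[_ nT IK].
by apply: dd' => //; rewrite nT andbT synced.
Qed.

Lemma nth_unperturbed i : del = 0 \/ i != j -> nth 0 z i = nth 0 z' i.
Proof. by rewrite nth_z' => -[->|/negbTE ->]; rewrite ?addr0 //; case: ifP; rewrite addr0. Qed.

Lemma sim_coupled_closed f s : del = 0 \/ (j < s_j s)%N -> (t0 < s_n s)%N ->
  s_n s = (size (s_pulls s)).+1 ->
  sim d z f s = (A, Some o) -> sim d' z' f s = (A, Some o).
Proof.
elim: f s => [//|f IH] s j_used t0_lt synced; rewrite !simS !roundE /=.
have -> : phase_updates z s = phase_updates z' s.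
  apply: eq_phases => i /andP[i1 _]; apply: nth_unperturbed.
  by case: j_used => [|ji]; [left | right; rewrite neq_ltn (leq_trans ji i1) orbT].
have [nS pullsS _] := phases_fixed z' s (iota 0 K).
rewrite -/(phase_updates z' s) in nS pullsS; set S := phase_updates z' s in nS pullsS *.
have syncedS : s_n S = (size (s_pulls S)).+1 by rewrite nS pullsS.
case: ifP => // _ run; rewrite -(reward_unchanged _ syncedS run); last by rewrite nS gtn_eqF.
apply: IH run => /=.
- by case: j_used => [|ji]; [left | right; apply: leq_trans ji (s_j_phases _ _ _)].
- by rewrite nS ltnS ltnW.
- by rewrite size_rcons syncedS.
Qed.

Section pending.
Variables (b : nat) (Dl : R).
Hypotheses (eps_neq0 : eps != 0) (b_lt : (b < K)%N) (K_lt_t0 : (K < t0)%N).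

Definition draw_shift_spec (Jo : option nat) :=
  if Jo is Some J then j = J /\ del = eps * Dl else del = 0.

Lemma sim_coupled_pending f s : (t0 < s_n s)%N ->
  skel_of s = skel_after A (s_n s - K.+1) -> s_n s = (size (s_pulls s)).+1 ->
  draw_shift_spec (closing_draw A b (T.+2 - s_n s) (s_n s - K.+1)) ->
  sim d z f (add_sum b Dl s) = (A, Some o) -> sim d' z' f s = (A, Some o).
Proof.
elim: f s => [//|f IH] s t0_lt skel_s synced spec run.
have K_lt : (K < s_n s)%N := ltn_trans K_lt_t0 t0_lt.
have nT : (s_n s <= T.+1)%N.
  by have [r EA] := sim_prefix run; rewrite synced ltnS -size_A EA size_cat leq_addr.
move: spec run; rewrite (subSn nT) !simS !roundE /=.
have [nS pullsS _] := phases_fixed z' s (iota 0 K).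
rewrite -/(phase_updates z' s) in nS pullsS; set S := phase_updates z' s in nS pullsS *.
have syncedS : s_n S = (size (s_pulls S)).+1 by rewrite nS pullsS.
have closes_now : skel_closes A b (s_n s - K.+1) = (2 * s_c0 s b <= s_cnt s b)%N.
  by rewrite /skel_closes -skel_s.
case: ifP => [close [jE del_eq]|idle spec].
  have jJ : j = sk_j (foldl skel_phase (skel_of s) (iota 0 b)).
    by rewrite jE /skel_draw -skel_s.
  have close_s : (2 * s_c0 s b <= s_cnt s b)%N by rewrite -closes_now.
  have z'j : nth 0 z' j = nth 0 z j + eps * Dl by rewrite nth_z' eqxx del_eq.
  have zz' : {in [pred i | s_j s <= i]%N, forall i, i != j -> nth 0 z i = nth 0 z' i}.
    by move=> i _ ij; apply: nth_unperturbed; right.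
  rewrite jJ in z'j zz'.
  have [-> j_used] := phase_updates_absorb _ _ _ _ _ eps_neq0 b_lt close_s z'j zz'.
  case: ifP => // _ run; rewrite -(reward_unchanged _ syncedS run); last by rewrite nS gtn_eqF.
  apply: sim_coupled_closed run => /=; rewrite ?nS ?size_rcons ?syncedS //.
  - by right; rewrite jJ.
  - by rewrite ltnS ltnW.
  - by rewrite pullsS synced.
have -> : phase_updates z (add_sum b Dl s) = add_sum b Dl S.
  apply: phases_add_sum; first by rewrite -closes_now idle.
  move=> i /andP[_ i2]; apply: nth_unperturbed; move: spec.
  case E: closing_draw => [J|] /=; last by left.
  case=> -> _; right; rewrite neq_ltn (leq_trans i2) //.
  by rewrite skel_s; exact: (closing_draw_ge _ _ E).
rewrite -[stop_rule (add_sum b Dl S)]/(stop_rule S) -[pulled_arm (add_sum b Dl S)]/(pulled_arm S).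
case: ifP => // _ run; have [pulled _ _] := pulled_arm_nth run syncedS.
have reward : d (s_n S) (pulled_arm S) = d' (s_n S) (pulled_arm S).
  by apply: reward_unchanged run => //; rewrite nS gtn_eqF.
rewrite -reward; rewrite pull_add_sum in run.
have round_s : (s_n s - K = (s_n s - K.+1).+1)%N by lia.
apply: IH run => /=; rewrite ?nS ?size_rcons ?syncedS.
- by rewrite ltnS ltnW.
- rewrite subSS round_s; apply: skel_of_round => //.
  by rewrite (pulled : pulled_arm S = _) nS; congr nth; lia.
- by rewrite pullsS synced.
- by rewrite !subSS round_s.
Qed.

Hypotheses (b_pulled_t0 : b = nth 0%N A t0.-1) (Dl_def : Dl = d t0 b - d' t0 b).

Lemma sim_coupled_before f s : (K < s_n s)%N -> (s_n s <= t0)%N ->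
  skel_of s = skel_after A (s_n s - K.+1) -> s_n s = (size (s_pulls s)).+1 ->
  draw_shift_spec (closing_draw A b (T.+1 - t0) (t0 - K)) ->
  sim d z f s = (A, Some o) -> sim d' z' f s = (A, Some o).
Proof.
elim: f s => [//|f IH] s K_lt n_le skel_s synced spec; rewrite !simS !roundE /=.
have -> : phase_updates z s = phase_updates z' s.
  apply: eq_phases => i /andP[_ i2]; apply: nth_unperturbed; move: spec.
  case E: closing_draw => [J|] /=; last by left.
  case=> -> _; right; rewrite neq_ltn (leq_trans i2) // skel_s.
  apply: leq_trans (closing_draw_ge _ _ E).
  change (sk_j (skel_after A (s_n s - K.+1).+1) <= sk_j (skel_after A (t0 - K)))%N.
  by apply: sk_j_after_mono; lia.
have [nS pullsS _] := phases_fixed z' s (iota 0 K).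
rewrite -/(phase_updates z' s) in nS pullsS; set S := phase_updates z' s in nS pullsS *.
have syncedS : s_n S = (size (s_pulls S)).+1 by rewrite nS pullsS.
case: ifP => // _ run; have [pulled _ _] := pulled_arm_nth run syncedS.
have round_s : (s_n s - K = (s_n s - K.+1).+1)%N by lia.
have skel_next X : skel_of (pull S X) = skel_after A (s_n (pull S X) - K.+1).
  rewrite /= nS subSS round_s; apply: skel_of_round => //.
  by rewrite (pulled : pulled_arm S = _) nS; congr nth; lia.
have [n_lt|n_t0] := ltnP (s_n s) t0.
  have reward : d (s_n S) (pulled_arm S) = d' (s_n S) (pulled_arm S).
    by apply: reward_unchanged run => //; rewrite nS ltn_eqF.
  rewrite -reward; apply: IH run => //=; rewrite nS.
  - by rewrite ltnS ltnW.
  - exact: n_lt.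
  - by rewrite size_rcons pullsS synced.
have n_eq : s_n s = t0 by apply/eqP; rewrite eqn_leq n_le.
have pulled_b : pulled_arm S = b by rewrite b_pulled_t0 (pulled : pulled_arm S = _) nS n_eq.
rewrite (pull_pulled_arm S _ (d' (s_n S) (pulled_arm S))) pulled_b nS n_eq -Dl_def in run.
rewrite pulled_b nS n_eq; apply: sim_coupled_pending run => /=; rewrite nS ?n_eq //.
- by rewrite skel_next /= nS n_eq.
- by rewrite size_rcons pullsS -synced n_eq.
Qed.

End pending.
End coupled_runs.

Lemma init_pulls_le {d z f A o} : sim d z f (init K eps d z) = (A, Some o) -> (K <= size A)%N.
Proof. by move/sim_prefix => [r ->]; rewrite size_cat size_iota leq_addr. Qed.

Section coupling.
Variables (d d' : nat -> nat -> R) (A : seq nat) (T t0 : nat).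
Hypotheses (eps_gt0 : 0 < eps) (K_gt0 : (0 < K)%N).
Hypotheses (size_A : size A = T) (A_lt : all (fun a => a < K)%N A) (t0_in : (1 <= t0 <= T)%N).
Hypothesis dd' : forall n a, (1 <= n <= T)%N -> n != t0 -> (a < K)%N -> d n a = d' n a.

Definition coupled_by (j : nat) (del : R) := forall z o,
  sim d z T.+1 (init K eps d z) = (A, Some o) ->
  sim d' (perturb_nth j del z) T.+1 (init K eps d' (perturb_nth j del z)) = (A, Some o).

Lemma coupled_early : (t0 <= K)%N ->
  coupled_by t0.-1 (eps * (d t0 t0.-1 - d' t0 t0.-1)).
Proof.
move=> t0_le z o run; set del := eps * _.
have K_le_T : (K <= T)%N by rewrite -size_A (init_pulls_le run).
have init_eq : trim (init K eps d z) = trim (init K eps d' (perturb_nth t0.-1 del z)).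
  rewrite /trim /init /=; congr St; apply/funext => a; case: ifP => // aK.
  rewrite nth_perturb_nth; have [->|a_ne] := eqVneq a t0.-1.
    rewrite prednK; last by case/andP: t0_in.
    by rewrite /del; field; rewrite gt_eqF.
  rewrite addr0 dd' //; first by apply/andP; split => //; apply: leq_trans K_le_T.
  by apply: contra a_ne => /eqP <-.
rewrite -sim_trim // init_eq sim_trim // in run.
apply: (sim_coupled_closed _ _ _ _ _ _ _ _ _ _ size_A A_lt dd' (nth_perturb_nth _ _ z)) run => //=.
- by right; apply: leq_trans t0_le; rewrite ltn_predL; case/andP: t0_in.
- by rewrite size_iota.
Qed.

Lemma coupled_late j del : (K < t0)%N ->
  let b := nth 0%N A t0.-1 in
  draw_shift_spec j del (d t0 b - d' t0 b) (closing_draw A b (T.+1 - t0) (t0 - K)) ->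
  coupled_by j del.
Proof.
move=> K_lt b spec z o run.
have t0_gt0 : (0 < t0)%N by case/andP: t0_in.
have b_lt : (b < K)%N.
  by apply: (allP A_lt); rewrite mem_nth // size_A prednK //; case/andP: t0_in.
have K_le_T : (K <= T)%N by rewrite -size_A (init_pulls_le run).
have j_late : del = 0 \/ (K <= j)%N.
  move: spec; case E: closing_draw => [J|] /=; last by left.
  case=> -> _; right; apply: leq_trans (closing_draw_ge _ _ E).
  exact: (sk_j_after_mono A 0 (t0 - K) (leq0n _)).
have init_eq : trim (init K eps d z) = trim (init K eps d' (perturb_nth j del z)).
  rewrite /trim /init /=; congr St; apply/funext => a; case: ifP => // aK.
  rewrite nth_perturb_nth dd' //.
  - case: j_late => [->|Kj]; first by case: ifP; rewrite addr0.
    by rewrite ifF ?addr0 // ltn_eqF // (leq_trans aK).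
  - exact: leq_trans aK K_le_T.
  - by rewrite ltn_eqF // (leq_ltn_trans aK K_lt).
rewrite -sim_trim // init_eq sim_trim // in run.
apply: (sim_coupled_before _ _ _ _ _ _ _ _ _ _ K_gt0 size_A A_lt dd'
  (nth_perturb_nth _ _ z) b _ _ b_lt K_lt erefl erefl) run => //=.
- by rewrite gt_eqF.
- by rewrite subnn.
- by rewrite size_iota.
Qed.

Lemma coupling : (forall a, (a < K)%N -> `|d t0 a - d' t0 a| <= 1) ->
  exists j del, [/\ (j < K * T.+2)%N, `|del| <= eps & coupled_by j del].
Proof.
move=> row_t0; have [t0_gt0 t0_le] := andP t0_in.
have shift_le a : (a < K)%N -> `|eps * (d t0 a - d' t0 a)| <= eps.
  by move=> aK; rewrite normrM gtr0_norm //; apply: ler_piMr; [exact: ltW | exact: row_t0].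
have [early|late] := leqP t0 K.
  exists t0.-1, (eps * (d t0 t0.-1 - d' t0 t0.-1)); split; last exact: coupled_early.
    by apply: leq_trans (leq_pmulr _ _) => //; lia.
  by apply: shift_le; lia.
set b := nth 0%N A t0.-1.
have b_lt : (b < K)%N by apply: (allP A_lt); rewrite mem_nth // size_A prednK.
case E: (closing_draw A b (T.+1 - t0) (t0 - K)) => [J|].
  exists J, (eps * (d t0 b - d' t0 b)); split; last by apply: coupled_late; rewrite //= E.
  - have [k k_lt ->] := closing_drawP _ _ E; apply: leq_trans (skel_draw_lt _ _ _ b_lt) _.
    by rewrite leq_mul2l ltnS; apply/orP; right; lia.
  - exact: shift_le.
exists 0%N, 0; split; last by apply: coupled_late; rewrite //= E.
- by rewrite muln_gt0 K_gt0.
- by rewrite normr0 ltW.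
Qed.

End coupling.
End adap_tt.

Theorem theorem3 (R : realType) (K : nat) (eps beta delta : R)
  (c : R -> nat -> nat -> nat -> nat -> R -> R) :
  0 < eps -> 0 < beta < 1 -> 0 < delta < 1 ->
  (forall k1 k2 n1 n2 : nat, 0 <= c eps k1 k2 n1 n2 delta) ->
  forall (T : nat) (d d' : nat -> nat -> R),
  (forall t a, (1 <= t <= T)%N -> (a < K)%N -> 0 <= d t a <= 1) ->
  (forall t a, (1 <= t <= T)%N -> (a < K)%N -> 0 <= d' t a <= 1) ->
  (exists t0, [/\ (1 <= t0 <= T)%N,
     (exists2 a, (a < K)%N & d t0 a != d' t0 a) &
     forall t a, (1 <= t <= T)%N -> t != t0 -> (a < K)%N -> d t a = d' t a]) ->
  forall (a : T.-tuple 'I_K) (ahat : 'I_K),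
  (traj_prob K beta delta eps c d (map val a) ahat T
     <= (expR eps)%:E * traj_prob K beta delta eps c d' (map val a) ahat T)%E.
Proof.
move=> eps_gt0 _ _ _ T d d' d01 d'01 [t0 [t0_in [a0 a0K _] dd']] a ahat.
have K_gt0 : (0 < K)%N by apply: leq_ltn_trans a0K.
have size_A : size (map val a) = T by rewrite size_map size_tuple.
have A_lt : all (fun x => x < K)%N (map val a).
  by apply/allP => _ /mapP[x _ ->]; exact: ltn_ord.
have row_t0 x : (x < K)%N -> `|d t0 x - d' t0 x| <= 1.
  move=> xK; have /andP[? ?] := d01 t0 x t0_in xK; have /andP[? ?] := d'01 t0 x t0_in xK.
  by rewrite ler_norml; apply/andP; split; lra.
have [j [t [j_lt t_le coupled]]] :=
  @coupling R K beta delta eps c d d' _ T t0 eps_gt0 K_gt0 size_A A_lt t0_in dd' row_t0.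
pose event e y : \bar R :=
  (if traj_event K beta delta eps c e y (map val a) ahat T then 1 else 0)%:E.
have event_ge0 e y : (0 <= event e y)%E by rewrite /event; case: traj_event.
have event_le y : (event d y <= event d' (perturb_nth j t y))%E.
  rewrite /event /traj_event; case: eqP => [/coupled ->|_]; first by rewrite eqxx.
  by case: eqP.
apply: le_trans (iint_perturb_le _ _ _ _ _ j_lt (event_ge0 d) (event_ge0 d') event_le) _.
by rewrite lee_wpmul2r ?lee_fin ?ler_expR //; exact: iint_ge0.
Qed.
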